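(* Let $G=A_n$ be the alternating group with $n\ge 5$, and let $p$ be an odd prime dividing $|G|$. Then $d_{p'}(G)\le 1/(p-1)$. Furthermore, equality holds if and only if $p=5$ and $n=5$ (i.e. $G=A_5\cong\mathrm{PSL}_2(5)$).
   Context: For a finite group $G$ and prime $p$, $k_{p'}(G)$ denotes the number of conjugacy classes of elements of $G$ whose order is not divisible by $p$, $|G|_{p'}$ is the largest divisor of $|G|$ coprime to $p$, and $d_{p'}(G)=k_{p'}(G)/|G|_{p'}$. *)

From mathcomp Require Import all_boot all_order all_algebra all_fingroup all_solvable.
Set Implicit Arguments. Unset Strict Implicit. Unset Printing Implicit Defensive.

Definition kp' (gT : finGroupType) (p : nat) (G : {set gT}) : nat :=
  #|[set (x ^: G)%g | x in G & (p^'.-elt x)%g]|.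

Definition dp' (gT : finGroupType) (p : nat) (G : {set gT}) : rat :=
  ((kp' p G)%:R / (#|G|`_p^')%:R)%R.

From mathcomp Require Import all_boot all_order all_algebra all_fingroup all_solvable.
From mathcomp Require Import zify.
Set Implicit Arguments. Unset Strict Implicit. Unset Printing Implicit Defensive.
Import GRing.Theory Num.Theory.

(** Every permutation of 'I_n is conjugate in Sym(n) to the block permutation
   whose cycles are consecutive intervals, of lengths given by its cycle type.
   A Sym(n)-class inside Alt(n) is therefore one Alt(n)-class or two, told
   apart by the parity of a conjugator from the block permutation, and it is
   one when the block permutation commutes with a transposition.  Bounding the
   number of cycle types by the 2^(n-1) compositions of n gives
   k_{p'}(A_n) <= 2^n, which is below |A_n|_{p'}/(p-1) for n >= 8 because
   (n!)_{p'} still grows like a factorial.  For n <= 7 the bound obtained from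
   the even cycle types of elements not of order p is evaluated; it reaches
   |A_n|_{p'}/(p-1) only for n = p = 5, where Cauchy's theorem provides
   5'-elements of orders 1, 2 and 3, hence three classes. *)

(* [blocks_succ l] is the successor map of the permutation of [0, sumn l)
   whose cycles are the consecutive intervals of lengths [l]; it is the
   identity beyond [sumn l]. *)
Fixpoint blocks_succ (l : seq nat) (k : nat) : nat :=
  if l is a :: l' then
    if k < a then k.+1 %% a else a + blocks_succ l' (k - a)
  else k.

Lemma blocks_succ_lt l k : k < sumn l -> blocks_succ l k < sumn l.
Proof.
elim: l k => [|a l IHl] k //= k_lt; case: (ltnP k a) => [k_lt_a | a_le_k].
  by rewrite ltn_addr // ltn_pmod //; lia.
by rewrite ltn_add2l IHl //; lia.
Qed.

(* Evaluable counterparts, on [nat], of "the block permutation of [l] has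
   order [p]" (for prime [p]) and "it commutes with a transposition". *)
Definition blocks_of_order (p : nat) (l : seq nat) : bool :=
  all (fun k => iter p (blocks_succ l) k == k) (iota 0 (sumn l)) &&
  has (fun k => blocks_succ l k != k) (iota 0 (sumn l)).

Definition tswap (i j k : nat) : nat := if k == i then j else if k == j then i else k.

Definition tswap_centralizes (l : seq nat) : bool :=
  let I := iota 0 (sumn l) in
  has (fun i => has (fun j => (i != j) &&
    all (fun k => tswap i j (blocks_succ l k) == blocks_succ l (tswap i j k)) I) I) I.

Section CyclicBlocks.
Variables (T : eqType) (f : T -> T) (x0 : T).

Definition cyclic_by (t : seq T) :=
  forall j, j < size t -> f (nth x0 t j) = nth x0 t (j.+1 %% size t).

Lemma cyclic_by_flatten (ts : seq (seq T)) :
    (forall t, t \in ts -> cyclic_by t) ->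
  forall k, k < size (flatten ts) ->
  f (nth x0 (flatten ts) k) = nth x0 (flatten ts) (blocks_succ (shape ts) k).
Proof.
elim: ts => [|t ts IHts] cyc_ts k //=; rewrite size_cat => k_lt.
have cyc_t := cyc_ts t (mem_head _ _).
rewrite !nth_cat; case: (ltnP k (size t)) => [k_lt_t | t_le_k].
  by rewrite ltn_pmod ?cyc_t //; lia.
rewrite ltnNge leq_addr /= addKn IHts //; last by lia.
by move=> u u_ts; apply: cyc_ts; rewrite inE u_ts orbT.
Qed.

End CyclicBlocks.

Section CycleDecomposition.
Variable n : nat.
Implicit Types (x : {perm 'I_n}) (y : 'I_n) (l : seq nat).
Open Scope group_scope.

Definition orbit_rep x y : 'I_n := odflt y [pick z in porbit x y].

Definition orbit_reps x : seq 'I_n :=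
  sort (fun a b => #|porbit x b| <= #|porbit x a|) (undup (map (orbit_rep x) (enum 'I_n))).

Definition cycles x : seq (seq 'I_n) :=
  [seq traject x r #|porbit x r| | r <- orbit_reps x].

Definition cycle_type x : seq nat := [seq #|porbit x r| | r <- orbit_reps x].

Lemma porbit_orbit_rep x y : porbit x (orbit_rep x y) = porbit x y.
Proof.
apply/eqP; rewrite eq_porbit_mem /orbit_rep.
by case: pickP => [z -> // | /(_ y)]; rewrite porbit_id.
Qed.

Lemma orbit_rep_idem x y : orbit_rep x (orbit_rep x y) = orbit_rep x y.
Proof. by rewrite {1}/orbit_rep porbit_orbit_rep /orbit_rep; case: pickP. Qed.

Lemma mem_orbit_reps x r : (r \in orbit_reps x) = (orbit_rep x r == r).
Proof.
rewrite mem_sort mem_undup; apply/mapP/eqP => [[y _ ->] | <-].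
  exact: orbit_rep_idem.
by exists r; rewrite ?mem_enum.
Qed.

Lemma uniq_orbit_reps x : uniq (orbit_reps x).
Proof. by rewrite sort_uniq undup_uniq. Qed.

Lemma porbit_inj_orbit_reps x : {in orbit_reps x &, injective (porbit x)}.
Proof.
move=> r r'; rewrite !mem_orbit_reps => /eqP <- /eqP <-.
rewrite !porbit_orbit_rep /orbit_rep => ->.
by case: pickP => // /(_ r'); rewrite porbit_id.
Qed.

Lemma shape_cycles x : shape (cycles x) = cycle_type x.
Proof. by rewrite /shape -map_comp; apply: eq_map => r /=; rewrite size_traject. Qed.

Lemma mem_cycles x y : y \in flatten (cycles x).
Proof.
apply/flatten_mapP; exists (orbit_rep x y).
  by rewrite mem_orbit_reps orbit_rep_idem.
by rewrite -porbit_traject porbit_orbit_rep porbit_id.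
Qed.

Lemma uniq_cycles x : uniq (flatten (cycles x)).
Proof.
have := @porbit_inj_orbit_reps x; rewrite /cycles.
elim: (orbit_reps x) (uniq_orbit_reps x) => //= r s IHs /andP[r_s s_uniq] inj.
rewrite cat_uniq uniq_traject_porbit IHs //= ?andbT; last first.
  by move=> a b a_s b_s; apply: inj; rewrite inE ?a_s ?b_s orbT.
apply/hasPn => y /flatten_mapP[r' r'_s y_r']; apply/negP => y_r.
rewrite -porbit_traject in y_r; rewrite -porbit_traject in y_r'.
suff eq_rr' : r = r' by rewrite eq_rr' r'_s in r_s.
apply: inj; rewrite ?inE ?eqxx ?r'_s ?orbT //.
have <- : porbit x y = porbit x r by apply/eqP; rewrite eq_porbit_mem.
by apply/eqP; rewrite eq_porbit_mem.
Qed.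

Lemma size_cycles x : size (flatten (cycles x)) = n.
Proof.
rewrite -[RHS]card_ord -(card_uniqP (uniq_cycles x)).
by apply: eq_card => y; rewrite mem_cycles.
Qed.

Lemma cyclic_by_cycles x y0 t : t \in cycles x -> cyclic_by x y0 t.
Proof.
case/mapP=> r _ -> j; rewrite size_traject => j_lt.
have r_gt0 : 0 < #|porbit x r| by rewrite lt0n card_porbit_neq0.
rewrite !(set_nth_default r) ?size_traject ?ltn_pmod // !nth_traject ?ltn_pmod // -iterS.
case: (ltngtP j.+1 #|porbit x r|) => [j1_lt | | ->]; [by rewrite modn_small | lia |].
by rewrite modnn iter_porbit.
Qed.

Lemma sumn_cycle_type x : sumn (cycle_type x) = n.
Proof. by rewrite -shape_cycles -size_flatten size_cycles. Qed.

Lemma cycle_type_gt0 x : all (fun a => 0 < a) (cycle_type x).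
Proof. by apply/allP => a /mapP[r _ ->]; rewrite lt0n card_porbit_neq0. Qed.

Lemma sorted_cycle_type x : sorted geq (cycle_type x).
Proof. by rewrite sorted_map; apply: sort_sorted => a b; apply: leq_total. Qed.

Lemma size_cycle_type x : size (cycle_type x) = #|porbits x|.
Proof.
rewrite size_map -(card_uniqP (uniq_orbit_reps x)).
rewrite -(card_in_imset (@porbit_inj_orbit_reps x)); apply: eq_card => A.
apply/imsetP/imsetP => [[r _ ->] | [y _ ->]]; first by exists r.
by exists (orbit_rep x y); rewrite ?porbit_orbit_rep // mem_orbit_reps orbit_rep_idem.
Qed.

Definition blocks_fun l (i : 'I_n) : 'I_n := insubd i (blocks_succ l i).

(* The identity when [blocks_fun l] is not injective. *)
Definition blocks_perm l : {perm 'I_n} :=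
  odflt (1 : {perm 'I_n}) (insub [ffun i => blocks_fun l i]).

Lemma blocks_permE l : injective (blocks_fun l) -> blocks_perm l =1 blocks_fun l.
Proof.
move=> inj_l i; rewrite /blocks_perm insubT /=.
  by apply/injectiveP => a b; rewrite !ffunE; apply: inj_l.
by move=> inj_f; rewrite -pvalE /= ffunE.
Qed.

Lemma val_blocks_fun l i : sumn l = n -> val (blocks_fun l i) = blocks_succ l i.
Proof. by move=> sum_l; rewrite val_insubd -{2}sum_l blocks_succ_lt // sum_l. Qed.

Definition listing x (i : 'I_n) : 'I_n := nth i (flatten (cycles x)) i.

Lemma listing_inj x : injective (listing x).
Proof.
move=> i j; rewrite /listing (set_nth_default i j) ?size_cycles // => /eqP.
by rewrite nth_uniq ?size_cycles ?uniq_cycles // => /eqP/val_inj.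
Qed.

Lemma listing_blocks x i : x (listing x i) = listing x (blocks_fun (cycle_type x) i).
Proof.
rewrite /listing (set_nth_default i) ?size_cycles // val_blocks_fun ?sumn_cycle_type //.
rewrite -shape_cycles cyclic_by_flatten ?size_cycles //.
by move=> t; apply: cyclic_by_cycles.
Qed.

Lemma blocks_fun_inj x : injective (blocks_fun (cycle_type x)).
Proof.
move=> i j eq_ij; apply: (@listing_inj x); apply: (@perm_inj _ x).
by rewrite !listing_blocks eq_ij.
Qed.

Lemma conj_blocks_perm x : exists g, x = blocks_perm (cycle_type x) ^ g.
Proof.
set g := perm (@listing_inj x); exists g; apply/permP => i.
rewrite conjgE !permM (blocks_permE (@blocks_fun_inj x)).
set j := g^-1 i; rewrite -[i in LHS](permKV g) -/j.
by rewrite !permE listing_blocks.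
Qed.

Lemma val_iter_blocks_perm x m i :
  val (iter m (blocks_perm (cycle_type x)) i) = iter m (blocks_succ (cycle_type x)) i.
Proof.
elim: m => //= m IHm.
by rewrite (blocks_permE (@blocks_fun_inj x)) val_blocks_fun ?sumn_cycle_type // IHm.
Qed.

Lemma order_cycle_type x p :
  prime p -> blocks_of_order p (cycle_type x) -> #[x] = p.
Proof.
move=> p_pr /andP[/allP iter_p /hasP[k k_lt moved_k]].
rewrite mem_iota sumn_cycle_type /= in k_lt.
have [g ->] := conj_blocks_perm x; rewrite orderJ; set b := blocks_perm _.
have b_p : b ^+ p = 1.
  apply/permP => i; apply: val_inj; rewrite permX perm1 val_iter_blocks_perm.
  by apply/eqP/iter_p; rewrite mem_iota sumn_cycle_type /=.
have b_nt : b != 1.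
  apply: contra moved_k => /eqP b1.
  by have := val_iter_blocks_perm x 1 (Ordinal k_lt); rewrite /= -/b b1 perm1 => <-.
by apply/(prime_nt_dvdP p_pr); rewrite ?order_eq1 // order_dvdn b_p.
Qed.

Lemma val_tperm (i j k : 'I_n) : val (tperm i j k) = tswap i j k.
Proof.
rewrite /tswap; case: tpermP => [-> | -> | /eqP ni /eqP nj]; rewrite ?eqxx //.
  by case: eqP => // /val_inj ->.
by rewrite !(inj_eq val_inj) (negbTE ni) (negbTE nj).
Qed.

Lemma odd_centralizer_blocks_perm x : tswap_centralizes (cycle_type x) ->
  exists2 t, odd_perm t & blocks_perm (cycle_type x) ^ t = blocks_perm (cycle_type x).
Proof.
rewrite /tswap_centralizes sumn_cycle_type.
case/hasP=> i; rewrite mem_iota /= add0n => i_lt /hasP[j].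
rewrite mem_iota /= add0n => j_lt /andP[neq_ij /allP comm].
set t := tperm (Ordinal i_lt) (Ordinal j_lt).
exists t; first by rewrite odd_tperm -(inj_eq val_inj).
apply/permP => k; rewrite conjgE !permM tpermV !(blocks_permE (@blocks_fun_inj x)).
apply: (@perm_inj _ t); rewrite tpermK; apply: val_inj.
rewrite val_tperm !val_blocks_fun ?sumn_cycle_type // val_tperm /=.
by rewrite (eqP (comm k _)) // mem_iota /=.
Qed.

End CycleDecomposition.

Definition inc_head (l : seq nat) : seq nat := if l is a :: l' then a.+1 :: l' else l.

Fixpoint compositions (m : nat) : seq (seq nat) :=
  match m with
  | 0 => [:: [::]]
  | 1 => [:: [:: 1]]
  | m'.+1 => map (cons 1) (compositions m') ++ map inc_head (compositions m')
  end.

Lemma size_compositions m : size (compositions m.+1) = 2 ^ m.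
Proof.
elim: m => [|m IHm] //.
by rewrite [compositions _]/= size_cat !size_map IHm expnS mul2n addnn.
Qed.

Lemma mem_compositions m l : all (fun a => 0 < a) l -> sumn l = m -> l \in compositions m.
Proof.
elim: m l => [|m IHm] [|a l] //=; first by case/andP; lia.
case/andP=> a_gt0 l_gt0 sum_al; case: m IHm sum_al => [|m] IHm sum_al.
  case: l l_gt0 sum_al => [|b l] /=; last by case/andP; lia.
  by rewrite addn0 => _ ->.
rewrite mem_cat; case: (ltnP 1 a) => [a_gt1 | a_le1].
  apply/orP; right; apply/mapP; exists (a.-1 :: l); last by rewrite /= prednK //; lia.
  by apply: IHm; rewrite /= ?l_gt0 ?andbT; lia.
have -> : a = 1 by lia.
by apply/orP; left; apply: map_f; apply: IHm => //; lia.
Qed.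

Definition partitions (m : nat) : seq (seq nat) := [seq l <- compositions m | sorted geq l].

Lemma conj_even_perm (T : finType) (b t g : {perm T}) :
  odd_perm t -> (b ^ t = b)%g -> exists2 h, (b ^ h = b ^ g)%g & ~~ odd_perm h.
Proof.
move=> odd_t bt; case odd_g: (odd_perm g); last by exists g; rewrite ?odd_g.
by exists (t * g)%g; rewrite ?conjgM ?bt // odd_permM odd_t odd_g.
Qed.

(* An Alt(n)-class of elements of Sym(n)-cycle type [l] is determined by the
   parity of a conjugator from the block permutation, or by [l] alone when a
   transposition centralizes the block permutation. *)
Definition class_labels (Lam : seq (seq nat)) : seq (seq nat * bool) :=
  [seq (l, c) | l <- Lam, c <- if tswap_centralizes l then [:: false] else [:: false; true]].

Lemma size_class_labels Lam : size (class_labels Lam) <= 2 * size Lam.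
Proof.
elim: Lam => [|l Lam IHLam] //.
rewrite /class_labels /= size_cat size_map -/(class_labels Lam).
by case: tswap_centralizes => /=; lia.
Qed.

Section AltClasses.
Variables n p : nat.
Local Notation G := ('Alt_('I_n))%g.
Implicit Types (b g h u : {perm 'I_n}) (X : {set {perm 'I_n}}).
Open Scope group_scope.

Definition conjugator u : {perm 'I_n} :=
  odflt 1 [pick g | u == blocks_perm n (cycle_type u) ^ g].

Lemma conjugatorP u : u = blocks_perm n (cycle_type u) ^ conjugator u.
Proof.
rewrite /conjugator; case: pickP => [g /eqP // | no_g].
by have [g def_u] := conj_blocks_perm u; move: (no_g g); rewrite -def_u eqxx.
Qed.

Definition class_label X : seq nat * bool :=
  let u := repr X in
  (cycle_type u, ~~ tswap_centralizes (cycle_type u) && odd_perm (conjugator u)).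

Lemma conjg_mem_class_Alt b g h : odd_perm g = odd_perm h -> b ^ h \in b ^ g ^: G.
Proof.
move=> eq_gh; apply/imsetP; exists (g^-1 * h); last by rewrite -conjgM mulKVg.
by rewrite Alt_even odd_permM odd_permV eq_gh addbb.
Qed.

Lemma class_label_inj : {in classes G &, injective class_label}.
Proof.
move=> X Y /repr_classesP[_ defX] /repr_classesP[_ defY].
rewrite /class_label; set u := repr X in defX *; set v := repr Y in defY *.
case=> eq_ct; rewrite -eq_ct defX defY => eq_odd; apply/class_eqP.
set b := blocks_perm n (cycle_type u).
have def_u : u = b ^ conjugator u := conjugatorP u.
have def_v : v = b ^ conjugator v by rewrite /b eq_ct; apply: conjugatorP.
case: (boolP (tswap_centralizes _)) eq_odd => [cent _ | _ /= eq_odd]; last first.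
  by rewrite {1}def_u def_v conjg_mem_class_Alt.
have [t odd_t bt] := odd_centralizer_blocks_perm cent.
have [g def_g even_g] := conj_even_perm (conjugator u) odd_t bt.
have [h def_h even_h] := conj_even_perm (conjugator v) odd_t bt.
by rewrite def_u def_v -def_g -def_h conjg_mem_class_Alt // (negbTE even_g) (negbTE even_h).
Qed.

Lemma kp'_Alt_le Lam :
    {in G, forall u, p^'.-elt u -> cycle_type u \in Lam} ->
  kp' p G <= size (class_labels Lam).
Proof.
move=> Lam_ct; pose C := [set x ^: G | x in G & p^'.-elt x].
have sCG : C \subset classes G.
  by apply/subsetP => _ /imsetP[x /setIdP[xG _] ->]; apply: mem_classes.
rewrite /kp' -/C cardE -(size_map class_label); apply: uniq_leq_size.
  rewrite map_inj_in_uniq ?enum_uniq // => X Y; rewrite !mem_enum => XC YC.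
  by apply: class_label_inj; apply: (subsetP sCG).
move=> lab /mapP[X]; rewrite mem_enum => /imsetP[x /setIdP[xG p'x] ->] ->.
rewrite /class_label; have [g gG ->] := repr_class G x.
apply/allpairsPdep; do 2!eexists; split; last by [].
  by apply: Lam_ct; rewrite ?groupJ ?p_eltJ.
by case: tswap_centralizes; case: odd_perm; rewrite !inE.
Qed.

Lemma cycle_type_compositions u : cycle_type u \in compositions n.
Proof. by apply: mem_compositions; [apply: cycle_type_gt0 | apply: sumn_cycle_type]. Qed.

Lemma odd_size_cycle_type u : u \in G -> odd (size (cycle_type u)) = odd n.
Proof. by rewrite Alt_even /odd_perm card_ord size_cycle_type; case: odd; case: odd. Qed.

Lemma p'elt_cycle_type u : prime p -> p^'.-elt u -> ~~ blocks_of_order p (cycle_type u).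
Proof.
move=> p_pr p'u; apply: contraL p'u => /(order_cycle_type p_pr) ord_u.
by rewrite /p_elt ord_u p'natE // dvdnn.
Qed.

Definition Alt_cycle_types : seq (seq nat) :=
  [seq l <- partitions n | (odd (size l) == odd n) && ~~ blocks_of_order p l].

Lemma kp'_Alt_le_cycle_types : prime p -> kp' p G <= size (class_labels Alt_cycle_types).
Proof.
move=> p_pr; apply: kp'_Alt_le => u uG p'u.
rewrite mem_filter odd_size_cycle_type // eqxx p'elt_cycle_type //= mem_filter.
by rewrite sorted_cycle_type cycle_type_compositions.
Qed.

Lemma kp'_Alt_le_exp2 : 0 < n -> kp' p G <= 2 ^ n.
Proof.
move=> n_gt0; apply: leq_trans (kp'_Alt_le (fun u _ _ => cycle_type_compositions u)) _.
apply: leq_trans (size_class_labels _) _.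
by rewrite -(prednK n_gt0) size_compositions expnS.
Qed.

End AltClasses.

Lemma p'partE (p : nat) m : 0 < m -> m`_p^' = m %/ p ^ logn p m.
Proof. by move=> m_gt0; rewrite -p_part -{2}(partnC p m_gt0) mulKn. Qed.

Lemma prime_dvd_fact_leq p m : prime p -> p %| m`! -> p <= m.
Proof.
move=> p_pr; elim: m => [|m IHm]; first by rewrite dvdn1 => /eqP p1; rewrite p1 in p_pr.
by rewrite factS Euclid_dvdM // => /orP[/dvdn_leq -> // | /IHm]; lia.
Qed.

Lemma exp2_mul_lt_fact m : 8 <= m -> 2 ^ m.+3 * m.+1 < m`!.
Proof.
elim: m => [|m IHm] //; rewrite leq_eqVlt => /orP[/eqP <- // | m_ge8].
by have := IHm m_ge8; rewrite factS !expnS; nia.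
Qed.

(* One of m.+1 and m.+2 is prime to p. *)
Lemma p'part_fact_step p m : prime p -> m.+1 * (m`!)`_p^' <= (m.+2`!)`_p^'.
Proof.
move=> p_pr; rewrite !factS !partnM ?muln_gt0 ?fact_gt0 // mulnA leq_pmul2r ?part_gt0 //.
have p'part_id k : ~~ (p %| k) -> k`_p^' = k by move=> pk; rewrite part_pnat_id ?p'natE.
case: (boolP (p %| m.+1)) => [p_m1 | /p'part_id ->]; last by rewrite leq_pmull ?part_gt0.
have p_m2 : ~~ (p %| m.+2) by rewrite -add1n dvdn_addl // Euclid_dvd1.
by rewrite (p'part_id _ p_m2); have := part_gt0 p^' m.+1; nia.
Qed.

Lemma p'part_fact_gt p m : prime p -> 2 < p -> p <= m -> 8 <= m ->
  2 ^ m.+1 * p.-1 < (m`!)`_p^'.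
Proof.
move=> p_pr p_gt2; elim/ltn_ind: m => m IHm p_le_m m_ge8.
have [m_le9 | m_gt9] := leqP m 9.
  have: p \in [:: 3; 5; 7].
    by case: p p_pr p_gt2 p_le_m {IHm} => [|[|[|[|[|[|[|[|[|[|p]]]]]]]]]] //=; lia.
  have: m \in [:: 8; 9] by rewrite !inE; lia.
  rewrite !inE => /orP[] /eqP -> /or3P[] /eqP ->;
    by rewrite !factS !partnM ?muln_gt0 ?fact_gt0 // !p'partE.
case: m IHm m_gt9 {m_ge8} p_le_m => [|[|m]] // IHm m_gt9 p_le_m.
have m_ge8 : 8 <= m by lia.
have step := p'part_fact_step m p_pr.
have [p_le | p_gt] := leqP p m.
  by have := IHm m (ltnW (ltnSn _)) p_le m_ge8; rewrite !expnS; nia.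
have p'fact : (m`!)`_p^' = m`!.
  by rewrite part_pnat_id // p'natE //; apply/negP => /(prime_dvd_fact_leq p_pr); lia.
by have := exp2_mul_lt_fact m_ge8; rewrite p'fact !expnS in step *; nia.
Qed.

Lemma kp'_gt_count_primes (gT : finGroupType) (G : {group gT}) p :
  count (predC1 p) (primes #|G|) < kp' p G.
Proof.
pose C := [set x ^: G | x in G & p^'.-elt x]%g.
have order_C q : q \in primes #|G| -> q != p -> q \in [seq #[repr X]%g | X <- enum C].
  rewrite mem_primes => /and3P[q_pr _ q_dvd] q_p; have [x xG ord_x] := Cauchy q_pr q_dvd.
  apply/mapP; exists (x ^: G)%g; last by have [g _ ->] := repr_class G x; rewrite orderJ.
  by rewrite mem_enum; apply/imsetP; exists x; rewrite // inE xG /p_elt ord_x pnatE //= inE.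
have order1_C : 1 \in [seq #[repr X]%g | X <- enum C].
  apply/mapP; exists (1 ^: G)%g; last by rewrite class1G repr_set1 order1.
  by rewrite mem_enum; apply/imsetP; exists 1%g; rewrite ?inE ?group1 ?p_elt1.
rewrite /kp' -/C [#|C|]cardE -(size_map (fun X => #[repr X]%g)) -size_filter.
apply: (@uniq_leq_size _ (1 :: filter (predC1 p) (primes #|G|))) => [|q].
  by rewrite /= filter_uniq ?primes_uniq // andbT mem_filter mem_primes /= andbF.
rewrite in_cons => /predU1P[-> // | ]; rewrite mem_filter => /andP[q_p q_G].
exact: order_C.
Qed.

Lemma Alt_small_table :
  all (fun n => all (fun p => [|| n < p, (n == 5) && (p == 5) |
         size (class_labels (Alt_cycle_types n p)) * p.-1 < (n`! %/ 2) %/ p ^ logn p (n`! %/ 2)])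
       [:: 3; 5; 7]) [:: 5; 6; 7].
Proof. by vm_compute. Qed.

Lemma size_class_labels_Alt5 : size (class_labels (Alt_cycle_types 5 5)) = 3.
Proof. by vm_compute. Qed.

Lemma card_Alt_ord n : 1 < n -> 2 * #|('Alt_('I_n))%g| = n`!.
Proof. by move=> n_gt1; have := card_Alt (T := 'I_n); rewrite card_ord; apply. Qed.

Lemma card_Alt5 : #|('Alt_('I_5))%g| = 60.
Proof. by rewrite -(mulKn #|_| (isT : 0 < 2)) card_Alt_ord. Qed.

Lemma kp'_Alt5 : kp' 5 ('Alt_('I_5))%g = 3.
Proof.
apply/eqP; rewrite eqn_leq; apply/andP; split.
  by rewrite -{2}size_class_labels_Alt5 kp'_Alt_le_cycle_types.
have := kp'_gt_count_primes ('Alt_('I_5))%G 5.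
by rewrite card_Alt5 (_ : count _ (primes 60) = 2).
Qed.

Lemma kp'_Alt_lt n p : 5 <= n -> prime p -> odd p -> p <= n -> ~~ ((n == 5) && (p == 5)) ->
  kp' p ('Alt_('I_n))%g * p.-1 < #|('Alt_('I_n))%g|`_p^'.
Proof.
move=> n_ge5 p_pr p_odd p_le_n not55; have p_gt2 := odd_prime_gt2 p_odd p_pr.
have cardG : 2 * #|('Alt_('I_n))%g| = n`! by apply: card_Alt_ord; lia.
have [n_le7 | n_gt7] := leqP n 7.
  have n_in : n \in [:: 5; 6; 7] by rewrite !inE; lia.
  have p_in : p \in [:: 3; 5; 7].
    move: p_pr p_gt2 (leq_trans p_le_n n_le7); clear.
    by case: p => [|[|[|[|[|[|[|[|p]]]]]]]] //=; lia.
  have /allP/(_ n n_in)/allP/(_ p p_in) := Alt_small_table.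
  rewrite ltnNge p_le_n (negbTE not55) -cardG mulKn // p'partE //=.
  by apply: leq_ltn_trans; rewrite leq_mul2r kp'_Alt_le_cycle_types ?orbT.
have := p'part_fact_gt p_pr p_gt2 p_le_n n_gt7.
rewrite -cardG partnM // (@part_pnat_id _ 2) ?p'natE ?gtnNdvd // expnS.
by have := kp'_Alt_le_exp2 p (ltn_trans (isT : 0 < 7) n_gt7); nia.
Qed.

Lemma ler_nat_ratio (k M q : nat) : 0 < M -> 0 < q ->
  ((k%:R / M%:R : rat) <= 1 / q%:R)%R = (k * q <= M).
Proof.
move=> M_gt0 q_gt0.
by rewrite ler_pdivrMr ?ltr0n // mul1r mulrC ler_pdivlMr ?ltr0n // -natrM ler_nat.
Qed.

Lemma eq_nat_ratioP (k M q : nat) : 0 < M -> 0 < q ->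
  reflect ((k%:R / M%:R : rat) = 1 / q%:R)%R (k * q == M).
Proof.
move=> M_gt0 q_gt0; rewrite -(eqr_nat rat) natrM -[X in _ == X]mul1r.
by rewrite -eqr_div ?pnatr_eq0 -?lt0n //; apply: eqP.
Qed.

Theorem proposition3p4 (n p : nat) :
  5 <= n -> prime p -> odd p -> p %| #|('Alt_('I_n))%g| ->
  (dp' p ('Alt_('I_n))%g <= 1 / (p.-1)%:R)%R /\
  (dp' p ('Alt_('I_n))%g = (1 / (p.-1)%:R)%R <-> p = 5 /\ n = 5).
Proof.
move=> n_ge5 p_pr p_odd p_dvd; have p_gt2 := odd_prime_gt2 p_odd p_pr.
have p_le_n : p <= n.
  by apply: (prime_dvd_fact_leq p_pr); rewrite -card_Alt_ord ?dvdn_mull //; lia.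
have [M_gt0 q_gt0] : 0 < #|('Alt_('I_n))%g|`_p^' /\ 0 < p.-1 by rewrite part_gt0; split; lia.
rewrite /dp' ler_nat_ratio // (rwP (eq_nat_ratioP _ M_gt0 q_gt0)).
have [/andP[/eqP n5 /eqP p5] | not55] := boolP ((n == 5) && (p == 5)).
  by rewrite n5 p5 kp'_Alt5 card_Alt5 p'partE.
have lt_M := kp'_Alt_lt n_ge5 p_pr p_odd p_le_n not55.
rewrite (ltnW lt_M) (ltn_eqF lt_M); do 2!split=> //.
by case=> p5 n5; move: not55; rewrite p5 n5.
Qed.
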